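(* Let $s\ge r\ge2$, let $Q$ be an $s$-vertex $r$-graph and let $\mathcal P$ be a $Q$-flat hereditary property of $r$-graphs. Then for every $n\ge s$ and every $H\in\mathcal P_n$, $$\mathcal N(Q,H)\le\pi(Q,\mathcal P)\,\frac{n^s}{s!},$$ and for every $p\ge1$, $$\lambda^{(p)}(Q,H)\le\pi(Q,\mathcal P)\,n^{s-s/p}.$$
   Context: An $r$-graph ($r\ge 2$) is a finite hypergraph all of whose edges have exactly $r$ vertices. For $I\subseteq V(H)$, $H[I]$ denotes the induced subhypergraph on $I$. For an $s$-vertex $r$-graph $Q$ and an $r$-graph $H$, $\mathcal N(Q,H)$ is the number of (not necessarily induced) subgraphs of $H$ isomorphic to $Q$. For an $n$-vertex $r$-graph $H$ with vertex set $[n]$ and $\mathbf x\in\mathbb R^n$, $P_{Q,H}(\mathbf x)=s!\sum_{\{i_1,\dots,i_s\}\in\binom{[n]}{s}}\mathcal N(Q,H[\{i_1,\dots,i_s\}])\,x_{i_1}\cdots x_{i_s}$, and for $p\ge1$, $\lambda^{(p)}(Q,H)=\max_{\|\mathbf x\|_p=1}P_{Q,H}(\mathbf x)$. A hereditary property $\mathcal P$ of $r$-graphs is a family of $r$-graphs closed under isomorphism and under taking induced subgraphs; as a standing assumption, whenever $H\in\mathcal P$, the disjoint union of $H$ with an isolated vertex is also in $\mathcal P$. $\mathcal P_n$ is the set of members of $\mathcal P$ with $n$ vertices. $ex(Q,\mathcal P_n)=\max\{\mathcal N(Q,H):H\in\mathcal P_n\}$ and $\pi(Q,\mathcal P)=\lim_{n\to\infty}ex(Q,\mathcal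 P_n)/\binom ns$ (this limit exists). $\lambda^{(p)}(Q,\mathcal P_n)=\max\{\lambda^{(p)}(Q,H):H\in\mathcal P_n\}$ and $\lambda^{(p)}(Q,\mathcal P)=\lim_{n\to\infty}\lambda^{(p)}(Q,\mathcal P_n)n^{s/p-s}$ (this limit exists). $\mathcal P$ is $Q$-flat if $\lambda^{(1)}(Q,\mathcal P)=\pi(Q,\mathcal P)$. *)

From HB Require Import structures.
From mathcomp Require Import all_boot all_order all_algebra.
From mathcomp Require Import all_classical all_reals all_analysis.
Set Implicit Arguments. Unset Strict Implicit. Unset Printing Implicit Defensive.
Import Order.TTheory GRing.Theory Num.Theory.
Import numFieldNormedType.Exports.
Local Open Scope ring_scope.

Definition is_rgraph (r n : nat) (E : {set {set 'I_n}}) : bool :=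
  [forall e in E, #|e| == r].

(* Induced subgraph pulled back along an injection f : 'I_m -> 'I_n
   (covers both relabelling by isomorphisms and induced subgraphs). *)
Definition pullback (m n : nat) (f : 'I_m -> 'I_n) (E : {set {set 'I_n}})
  : {set {set 'I_m}} := [set e : {set 'I_m} | f @: e \in E].

(* H plus one isolated vertex (the new vertex is n). *)
Definition add_isolated (n : nat) (E : {set {set 'I_n}}) : {set {set 'I_n.+1}} :=
  (fun e : {set 'I_n} => [set widen_ord (leqnSn n) i | i in e]) @: E.

Definition hereditary (r : nat) (P : forall n : nat, {set {set 'I_n}} -> bool) : Prop :=
  [/\ (forall n (E : {set {set 'I_n}}), P n E -> is_rgraph r E),
      (forall m n (f : 'I_m -> 'I_n), injective f ->
         forall E : {set {set 'I_n}}, P n E -> P m (pullback f E))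
    & (forall n (E : {set {set 'I_n}}), P n E -> P n.+1 (add_isolated E))].

(* Number of subgraphs (V', E') of H[I] (V' ⊆ I, E' ⊆ E) isomorphic to Q. *)
Definition Nsub (s n : nat) (Q : {set {set 'I_s}}) (E : {set {set 'I_n}})
  (I : {set 'I_n}) : nat :=
  #|[set VE : {set 'I_n} * {set {set 'I_n}} |
      [&& VE.1 \subset I, VE.2 \subset E,
          [forall e in VE.2, e \subset VE.1] &
          [exists f : {ffun 'I_s -> 'I_n},
             [&& injectiveb f, f @: [set: 'I_s] == VE.1 &
                 (fun e : {set 'I_s} => [set f i | i in e]) @: Q == VE.2]]]]|.

Definition Ncount (s n : nat) (Q : {set {set 'I_s}}) (E : {set {set 'I_n}}) : nat :=
  Nsub Q E [set: 'I_n].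

Definition PQH (R : realType) (s n : nat) (Q : {set {set 'I_s}})
  (E : {set {set 'I_n}}) (x : 'I_n -> R) : R :=
  (s`!)%:R * \sum_(I : {set 'I_n} | #|I| == s) (Nsub Q E I)%:R * \prod_(i in I) x i.

Definition normp (R : realType) (n : nat) (p : R) (x : 'I_n -> R) : R :=
  powR (\sum_(i < n) powR `|x i| p) p^-1.

(* lambda^(p)(Q,H) = max_{||x||_p = 1} P_{Q,H}(x) (the max exists by compactness) *)
Definition lamH (R : realType) (p : R) (s n : nat) (Q : {set {set 'I_s}})
  (E : {set {set 'I_n}}) : R :=
  sup [set PQH Q E x | x in [set x : 'I_n -> R | normp p x = 1]].

Definition exQP (s : nat) (Q : {set {set 'I_s}})
  (P : forall n : nat, {set {set 'I_n}} -> bool) (n : nat) : nat :=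
  \max_(E : {set {set 'I_n}} | P n E) Ncount Q E.

Definition piQP (R : realType) (s : nat) (Q : {set {set 'I_s}})
  (P : forall n : nat, {set {set 'I_n}} -> bool) : R :=
  limn (fun n : nat => (exQP Q P n)%:R / ('C(n, s))%:R : R).

Definition lamPn (R : realType) (p : R) (s : nat) (Q : {set {set 'I_s}})
  (P : forall n : nat, {set {set 'I_n}} -> bool) (n : nat) : R :=
  \big[Num.max/0]_(E : {set {set 'I_n}} | P n E) lamH p Q E.

Definition lamP (R : realType) (p : R) (s : nat) (Q : {set {set 'I_s}})
  (P : forall n : nat, {set {set 'I_n}} -> bool) : R :=
  limn (fun n : nat => lamPn p Q P n * powR (n%:R) (s%:R / p - s%:R)).

Definition Qflat (R : realType) (s : nat) (Q : {set {set 'I_s}})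
  (P : forall n : nat, {set {set 'I_n}} -> bool) : Prop :=
  lamP 1 Q P = piQP R Q P.

(* Since P is Q-flat, pi(Q,P) = lim_n lambda^(1)(Q,P_n), and this sequence is
   nondecreasing because adding an isolated vertex does not decrease the
   Lagrangian; hence lambda^(1)(Q,H) <= pi(Q,P) for every H in P.  Evaluating
   P_{Q,H} at the uniform vector (1/n,...,1/n) gives s! N(Q,H) / n^s <=
   lambda^(1)(Q,H).  For p >= 1, P_{Q,H} is homogeneous of degree s and a unit
   vector in l^p has l^1 norm at most n^(1-1/p), so
   lambda^(p)(Q,H) <= n^(s - s/p) lambda^(1)(Q,H). *)
From HB Require Import structures.
From mathcomp Require Import all_boot all_order all_algebra.
From mathcomp Require Import all_classical all_reals all_analysis.
From mathcomp Require Import ring.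
Import Order.TTheory GRing.Theory Num.Theory.
Import numFieldNormedType.Exports.
Local Open Scope ring_scope.

Section Counting.
Variables (s n : nat) (Q : {set {set 'I_s}}) (E : {set {set 'I_n}}).

(* Each copy of Q on I is determined by a map 'I_s -> I. *)
Lemma Nsub_le_expn (I : {set 'I_n}) :
  (0 < s)%N -> #|I| = s -> (Nsub Q E I <= s ^ s)%N.
Proof.
move=> s_gt0 cardI.
have [x0 x0I] : exists x0, x0 \in I by apply/finset.set0Pn; rewrite -card_gt0 cardI.
pose F := [set f : {ffun 'I_s -> 'I_n} | f @: [set: 'I_s] \subset I].
pose copy (f : {ffun 'I_s -> 'I_n}) :=
  (f @: [set: 'I_s], (fun e : {set 'I_s} => [set f i | i in e]) @: Q).
apply: (@leq_trans #|copy @: F|).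
  apply: subset_leq_card; apply/fintype.subsetP => -[V W].
  rewrite inE /= => /and4P[VI _ _ /existsP[f /and3P[_ /eqP fV /eqP fW]]].
  by apply/imsetP; exists f; rewrite /copy ?inE fV ?fW.
apply: leq_trans (leq_imset_card _ _) _.
pose code (f : {ffun 'I_s -> 'I_n}) := [ffun k => enum_rank_in x0I (f k)].
have code_inj : {in F &, injective code}.
  move=> f1 f2; rewrite !inE => /fintype.subsetP f1I /fintype.subsetP f2I.
  move=> /ffunP eq_code.
  apply/ffunP => k; have := eq_code k; rewrite !ffunE => /(congr1 enum_val).
  by rewrite !enum_rankK_in //; [apply: f2I | apply: f1I]; apply/imsetP; exists k.
apply: leq_trans (@leq_card_in _ _ code F code_inj) _.
by rewrite card_ffun !card_ord cardI.
Qed.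

Lemma Ncount_le_sum_Nsub :
  (Ncount Q E <= \sum_(I : {set 'I_n} | #|I| == s) Nsub Q E I)%N.
Proof.
rewrite /Ncount /Nsub -sum1_card.
rewrite (partition_big fst (fun I : {set 'I_n} => #|I| == s)) /=.
  apply: leq_sum => I _; rewrite sum1dep_card.
  apply: subset_leq_card; apply/fintype.subsetP => -[V W].
  by rewrite !inE /= => /andP[/and4P[_ -> -> ->] /eqP ->]; rewrite subxx.
move=> [V W]; rewrite inE /= => /and4P[_ _ _ /existsP[f /and3P[f_inj /eqP <- _]]].
by rewrite card_imset ?cardsT ?card_ord //; apply/injectiveP.
Qed.

Lemma leq_Nsub_imset m (phi : 'I_n -> 'I_m) (I : {set 'I_n}) : injective phi ->
  (Nsub Q E I <= Nsub Q ((fun e : {set 'I_n} => phi @: e) @: E) (phi @: I))%N.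
Proof.
move=> phi_inj; rewrite /Nsub.
pose G (VW : {set 'I_n} * {set {set 'I_n}}) :=
  (phi @: VW.1, (fun e : {set 'I_n} => phi @: e) @: VW.2).
have G_inj : injective G.
  by move=> [V1 W1] [V2 W2] [/(imset_inj phi_inj) -> /(imset_inj (imset_inj phi_inj)) ->].
rewrite -(card_imset _ G_inj); apply: subset_leq_card.
apply/fintype.subsetP => _ /imsetP[[V W] + ->].
rewrite !inE /= => /and4P[VI WE /forall_inP WV /existsP[f /and3P[f_inj /eqP fV /eqP fW]]].
apply/and4P; split; [exact: imsetS | exact: imsetS | |].
  by apply/forall_inP => _ /imsetP[e eW ->]; apply/imsetS/WV.
apply/existsP; exists [ffun i => phi (f i)]; apply/and3P; split.
- by apply/injectiveP => i j; rewrite !ffunE => /phi_inj/(injectiveP _ f_inj).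
- by rewrite -fV -imset_comp; apply/eqP/eq_imset => i; rewrite ffunE.
- rewrite -fW -imset_comp; apply/eqP/eq_imset => e /=; rewrite -imset_comp.
  by apply: eq_imset => i; rewrite ffunE.
Qed.

End Counting.

Section Inequalities.
Context {R : realType}.

Lemma sum_prod_card_le_expR n s (y : 'I_n -> R) : (forall i, 0 <= y i) ->
  \sum_(I : {set 'I_n} | #|I| == s) \prod_(i in I) y i <= expR (\sum_i y i).
Proof.
move=> y_ge0.
apply: (@le_trans _ _ (\sum_(I : {set 'I_n}) \prod_(i in I) y i)).
  rewrite [leRHS](bigID (fun I : {set 'I_n} => #|I| == s)) /= lerDl.
  by apply: sumr_ge0 => I _; apply: prodr_ge0.
have -> : \sum_(I : {set 'I_n}) \prod_(i in I) y i = \prod_i (y i + 1).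
  rewrite (@bigA_distr R 0 1 *%R +%R _ y (fun=> 1)).
  by apply: congr_big => // J; rewrite -big_mkcond.
rewrite expR_sum; apply: ler_prod => i _.
by rewrite addr_ge0 //= addrC expR_ge1Dx.
Qed.

(* Power mean inequality, derived from Young's inequality
   [a c <= a^p c^p / p + 1/q] with [c = n^(1/p)]. *)
Lemma sum_le_card_powR {n} (p : R) (a : 'I_n -> R) : (0 < n)%N -> 1 <= p ->
  (forall i, 0 <= a i) -> \sum_i powR (a i) p = 1 ->
  \sum_i a i <= powR n%:R (1 - p^-1).
Proof.
move=> n_gt0 p_ge1 a_ge0 sum_ap.
have [p1|p_neq1] := eqVneq p 1.
  rewrite p1 invr1 subrr powRr0 -sum_ap p1 le_eqVlt; apply/orP; left.
  by apply/eqP/eq_bigr => i _; rewrite powRr1.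
have p_gt0 : 0 < p by apply: lt_le_trans p_ge1.
have p_gt1 : 1 < p by rewrite lt_neqAle eq_sym p_neq1 p_ge1.
set q := (1 - p^-1)^-1.
have q_gt0 : 0 < q by rewrite invr_gt0 subr_gt0 invf_lt1.
have pq : p^-1 + q^-1 = 1 by rewrite /q invrK addrC subrK.
have n_gt0R : 0 < n%:R :> R by rewrite ltr0n.
set c := powR n%:R p^-1.
have c_gt0 : 0 < c by apply: powR_gt0.
have cp : powR c p = n%:R by rewrite /c -powRrM mulVf ?gt_eqF // powRr1 // ltW.
have young i : a i * c <= powR (a i) p * n%:R / p + q^-1.
  have := conjugate_powR (mulr_ge0 (a_ge0 i) (ltW c_gt0)) ler01 p_gt0 q_gt0 pq.
  by rewrite mulr1 powR1 div1r powRM ?(ltW c_gt0) // cp.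
have : (\sum_i a i) * c <= n%:R.
  rewrite mulr_suml; apply: le_trans (ler_sum _ (fun i _ => young i)) _.
  rewrite big_split /= -!mulr_suml sum_ap sumr_const card_ord.
  have -> : 1 * n%:R / p + q^-1 *+ n = n%:R * (p^-1 + q^-1) by rewrite -mulr_natl; ring.
  by rewrite pq mulr1.
rewrite -ler_pdivlMr // => /le_trans; apply.
rewrite powRB ?pnatr_eq0 -?lt0n ?n_gt0 ?implybT //.
by rewrite powRr1 ?ler0n.
Qed.

End Inequalities.

Section Polynomial.
Context {R : realType} {s : nat} {Q : {set {set 'I_s}}}.

Lemma normp1E {n} (x : 'I_n -> R) : normp 1 x = \sum_i `|x i|.
Proof.
rewrite /normp invr1 powRr1; last by apply: sumr_ge0 => i _; exact: powR_ge0.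
by apply: eq_bigr => i _; rewrite powRr1.
Qed.

Lemma PQH_ge0 {n} (E : {set {set 'I_n}}) (x : 'I_n -> R) :
  (forall i, 0 <= x i) -> 0 <= PQH Q E x.
Proof.
by move=> x_ge0; rewrite /PQH mulr_ge0 // sumr_ge0 // => I _; rewrite mulr_ge0 ?prodr_ge0.
Qed.

Lemma PQH_le_norm {n} (E : {set {set 'I_n}}) (x : 'I_n -> R) :
  PQH Q E x <= PQH Q E (fun i => `|x i|).
Proof.
rewrite /PQH; apply: ler_wpM2l => //; apply: ler_sum => I _.
by apply: ler_wpM2l => //; rewrite -normr_prod ler_norm.
Qed.

Lemma PQHZ {n} (E : {set {set 'I_n}}) (c : R) (x : 'I_n -> R) :
  PQH Q E (fun i => c * x i) = c ^+ s * PQH Q E x.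
Proof.
rewrite /PQH [RHS]mulrCA [in RHS]mulr_sumr; congr (_ * _); apply: eq_bigr => I /eqP cardI.
by rewrite big_split /= prodr_const cardI mulrCA.
Qed.

Lemma PQH_le_expR {n} (E : {set {set 'I_n}}) (x : 'I_n -> R) : (0 < s)%N ->
  PQH Q E x <= (s`!)%:R * (s ^ s)%:R * expR (\sum_i `|x i|).
Proof.
move=> s_gt0; apply: le_trans (PQH_le_norm _ _) _.
rewrite /PQH -mulrA; apply: ler_wpM2l => //.
apply: (@le_trans _ _ (\sum_(I : {set 'I_n} | #|I| == s)
                        (s ^ s)%:R * \prod_(i in I) `|x i|)).
  apply: ler_sum => I /eqP cardI; apply: ler_wpM2r; first exact: prodr_ge0.
  by rewrite ler_nat Nsub_le_expn.
by rewrite -mulr_sumr ler_wpM2l // sum_prod_card_le_expR.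
Qed.

Definition ext0 {n} (y : 'I_n -> R) (i : 'I_n.+1) : R :=
  if insub (val i) is Some j then y j else 0.

Lemma ext0_widen {n} (y : 'I_n -> R) i : ext0 y (widen_ord (leqnSn n) i) = y i.
Proof.
rewrite /ext0; case: insubP => [j _ ij|]; last by rewrite /= ltn_ord.
by congr y; apply: val_inj; rewrite ij.
Qed.

Lemma ext0_max {n} (y : 'I_n -> R) : ext0 y ord_max = 0.
Proof. by rewrite /ext0; case: insubP => [j /=|//]; rewrite ltnn. Qed.

Lemma normp1_ext0 {n} (y : 'I_n -> R) : normp 1 (ext0 y) = normp 1 y.
Proof.
rewrite !normp1E big_ord_recr /= ext0_max normr0 addr0.
by apply: eq_bigr => i _; rewrite ext0_widen.
Qed.

Lemma PQH_le_add_isolated {n} (E : {set {set 'I_n}}) (y : 'I_n -> R) :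
  (forall i, 0 <= y i) -> PQH Q E y <= PQH Q (add_isolated E) (ext0 y).
Proof.
move=> y_ge0; rewrite /PQH; apply: ler_wpM2l => //.
set w := widen_ord (leqnSn n).
have w_inj : injective w by move=> i j /(congr1 val) ij; apply: val_inj.
pose widened := (fun I : {set 'I_n} => w @: I) @: [set I : {set 'I_n} | #|I| == s].
rewrite [leRHS](bigID (mem widened)) /= -[leLHS]addr0; apply: lerD; last first.
  apply: sumr_ge0 => I _; rewrite mulr_ge0 // prodr_ge0 // => i _.
  by rewrite /ext0; case: insub.
rewrite (eq_bigl (mem widened)); last first.
  move=> I' /=; apply/idP/idP => [/andP[] //|I'_wid]; rewrite I'_wid andbT.
  by case/imsetP: I'_wid => I; rewrite inE => /eqP <- ->; rewrite card_imset.
rewrite big_imset /=; last by move=> I1 I2 _ _; apply: imset_inj.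
rewrite [leRHS](eq_bigl (fun I : {set 'I_n} => #|I| == s)); last by move=> I; rewrite inE.
apply: ler_sum => I _; apply: ler_pM; rewrite ?prodr_ge0 //.
  by rewrite ler_nat leq_Nsub_imset.
rewrite big_imset /=; last by move=> i j _ _; apply: w_inj.
by under [leRHS]eq_bigr do rewrite ext0_widen.
Qed.

End Polynomial.

Local Open Scope classical_set_scope.

Section Lagrangian.
Context {R : realType} {s : nat} {Q : {set {set 'I_s}}}.
Implicit Types (p c : R).

Lemma lamH_le {n} (E : {set {set 'I_n}}) p c : 0 <= c ->
  (forall x, normp p x = 1 -> PQH Q E x <= c) -> lamH p Q E <= c.
Proof.
move=> c_ge0 ub; rewrite /lamH; set S := (X in sup X).
have [S_neq0|S_eq0] := pselect (S !=set0).
  by apply: ge_sup => // _ [x /= nx <-]; exact: ub.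
suff -> : S = set0 by rewrite sup0.
by apply/seteqP; split => // y Sy; apply: S_eq0; exists y.
Qed.

Lemma PQH_le_lamH {n} (E : {set {set 'I_n}}) p c (x : 'I_n -> R) :
  (forall y, normp p y = 1 -> PQH Q E y <= c) ->
  normp p x = 1 -> PQH Q E x <= lamH p Q E.
Proof.
move=> ub nx; apply: ub_le_sup; last by exists x.
by exists c => _ [y /= ny <-]; exact: ub.
Qed.

Lemma PQH_le_lamH1 {n} (E : {set {set 'I_n}}) (x : 'I_n -> R) : (0 < s)%N ->
  normp 1 x = 1 -> PQH Q E x <= lamH 1 Q E.
Proof.
move=> s_gt0; apply: (PQH_le_lamH E 1 ((s`!)%:R * (s ^ s)%:R * expR 1)) => y ny.
by apply: le_trans (PQH_le_expR _ _ s_gt0) _; rewrite -normp1E ny.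
Qed.

Lemma lamH1_le {n} (E : {set {set 'I_n}}) : (0 < s)%N ->
  lamH (1 : R) Q E <= (s`!)%:R * (s ^ s)%:R * expR 1.
Proof.
move=> s_gt0; apply: lamH_le; first by rewrite !mulr_ge0 ?expR_ge0.
by move=> x nx; apply: le_trans (PQH_le_expR _ _ s_gt0) _; rewrite -normp1E nx.
Qed.

Lemma normp1_uniform {n} : (0 < n)%N -> normp 1 (fun _ : 'I_n => n%:R^-1 : R) = 1.
Proof.
move=> n_gt0; rewrite normp1E sumr_const card_ord ger0_norm ?invr_ge0 ?ler0n //.
by rewrite -[_ *+ n]mulr_natr mulVf // pnatr_eq0 -lt0n.
Qed.

Lemma lamH1_ge0 {n} (E : {set {set 'I_n}}) : (0 < s)%N -> (0 < n)%N ->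
  0 <= lamH (1 : R) Q E.
Proof.
move=> s_gt0 n_gt0; apply: le_trans (PQH_le_lamH1 E _ s_gt0 (normp1_uniform n_gt0)).
by apply: PQH_ge0 => i; rewrite invr_ge0 ler0n.
Qed.

Lemma lamH1_le_add_isolated {n} (E : {set {set 'I_n}}) : (0 < s)%N ->
  lamH (1 : R) Q E <= lamH 1 Q (add_isolated E).
Proof.
move=> s_gt0; apply: lamH_le => [|x nx]; first exact: lamH1_ge0.
apply: le_trans (PQH_le_norm _ _) _.
apply: le_trans (PQH_le_add_isolated _ _ _) _ => //.
apply: PQH_le_lamH1 => //; rewrite normp1_ext0 -[RHS]nx !normp1E.
by apply: eq_bigr => i _; rewrite normr_id.
Qed.

Lemma Ncount_le_lamH1 {n} (E : {set {set 'I_n}}) : (0 < s)%N -> (0 < n)%N ->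
  (Ncount Q E)%:R <= lamH (1 : R) Q E * n%:R ^+ s / (s`!)%:R.
Proof.
move=> s_gt0 n_gt0.
pose K : R := (s`!)%:R * (\sum_(I : {set 'I_n} | #|I| == s) Nsub Q E I)%:R.
have PQH1 : PQH Q E (fun=> 1) = K.
  by rewrite /PQH /K natr_sum; congr (_ * _); apply: eq_bigr => I _; rewrite big1 ?mulr1.
have uniformE : (fun _ : 'I_n => n%:R^-1 : R) = (fun i => n%:R^-1 * (fun=> 1 : R) i).
  by apply: funext => i; rewrite mulr1.
have := PQH_le_lamH1 E _ s_gt0 (normp1_uniform n_gt0).
rewrite uniformE PQHZ PQH1 exprVn => K_le.
rewrite ler_pdivlMr ?ltr0n ?fact_gt0 //.
apply: (@le_trans _ _ (n%:R ^+ s * (n%:R^-s * K))).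
  rewrite mulVKf ?expf_neq0 ?pnatr_eq0 -?lt0n // mulrC.
  by rewrite ler_wpM2l // ler_nat Ncount_le_sum_Nsub.
by rewrite mulrC ler_wpM2r ?exprn_ge0 ?ler0n.
Qed.

Lemma lamH_le_lamH1 {n} (E : {set {set 'I_n}}) p : (0 < s)%N -> (0 < n)%N -> 1 <= p ->
  lamH p Q E <= lamH 1 Q E * powR n%:R (s%:R - s%:R / p).
Proof.
move=> s_gt0 n_gt0 p_ge1; have p_gt0 : 0 < p by apply: lt_le_trans p_ge1.
apply: lamH_le => [|x nx]; first by rewrite mulr_ge0 ?powR_ge0 ?lamH1_ge0.
pose a i := `|x i|; pose t := \sum_i a i.
have sum_ap : \sum_i powR (a i) p = 1.
  move/eqP: nx; rewrite /normp powR_eq1 => /or3P[/eqP // | | ].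
    by rewrite ltNge sumr_ge0 // => i _; apply: powR_ge0.
  by rewrite invr_eq0 gt_eqF.
have t_gt0 : 0 < t.
  have t_ge0 : 0 <= t by apply: sumr_ge0 => i _; exact: normr_ge0.
  rewrite lt_neqAle t_ge0 andbT; apply: contra_eqN sum_ap => /eqP/esym t0.
  rewrite big1 1?eq_sym ?oner_eq0 // => i _.
  by rewrite /a (psumr_eq0P (fun j _ => normr_ge0 (x j)) t0) // powR0 ?gt_eqF.
have t_le : t <= powR n%:R (1 - p^-1) by apply: sum_le_card_powR => // i; exact: normr_ge0.
have a_tZ : a = (fun i => t * (a i / t)) by apply: funext => i; rewrite mulrC divfK ?gt_eqF.
have ny : normp 1 (fun i => a i / t) = 1.
  rewrite normp1E -[RHS](@mulfV _ t) ?gt_eqF // mulr_suml.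
  by apply: eq_bigr => i _; rewrite ger0_norm // divr_ge0 ?normr_ge0 ?ltW.
apply: le_trans (PQH_le_norm _ _) _; rewrite -/a a_tZ PQHZ mulrC.
apply: ler_pM.
- by apply: PQH_ge0 => i; rewrite divr_ge0 ?normr_ge0 ?ltW.
- by rewrite exprn_ge0 ?ltW.
- exact: PQH_le_lamH1.
have -> : s%:R - s%:R / p = (1 - p^-1) * s%:R :> R by ring.
rewrite powRrM powR_mulrn ?powR_ge0 //.
by apply: lerXn2r => //; rewrite nnegrE ?powR_ge0 // ltW.
Qed.

End Lagrangian.

Section Property.
Context {R : realType} {s : nat} {Q : {set {set 'I_s}}}
  {P : forall n : nat, {set {set 'I_n}} -> bool}.

Lemma lamH_le_lamPn (p : R) {n} (E : {set {set 'I_n}}) :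
  P n E -> lamH p Q E <= lamPn p Q P n.
Proof. exact: le_bigmax_cond. Qed.

Lemma lamPn_ge0 (p : R) n : 0 <= lamPn p Q P n.
Proof. exact: bigmax_ge_id. Qed.

Lemma lamPn1_le_succ {r} n : (0 < s)%N -> hereditary r P ->
  lamPn (1 : R) Q P n <= lamPn 1 Q P n.+1.
Proof.
move=> s_gt0 [_ _ P_isolated]; apply: bigmax_le => [|E PE]; first exact: lamPn_ge0.
apply: le_trans (lamH1_le_add_isolated E s_gt0) _.
exact/lamH_le_lamPn/P_isolated.
Qed.

(* For p = 1 the normalising factor n^(s/p - s) of lamP is 1, so flatness
   identifies pi(Q,P) with the limit of the nondecreasing sequence lamPn 1. *)
Lemma lamPn1_le_piQP {r} n : (0 < s)%N -> hereditary r P -> Qflat R Q P ->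
  lamPn 1 Q P n <= piQP R Q P.
Proof.
move=> s_gt0 P_her P_flat; pose u k := lamPn (1 : R) Q P k.
have u_nd : nondecreasing_seq u.
  by apply/nondecreasing_seqP => k; exact: lamPn1_le_succ P_her.
have u_cvg : cvgn u.
  apply: nondecreasing_is_cvgn => //.
  exists ((s`!)%:R * (s ^ s)%:R * expR 1) => _ [k _ <-].
  by apply: bigmax_le => [|E _]; rewrite ?mulr_ge0 ?expR_ge0 ?lamH1_le.
have -> : piQP R Q P = limn u.
  rewrite -P_flat /lamP; congr (lim (_ @ \oo)); apply: funext => k.
  by rewrite divr1 subrr powRr0 mulr1.
exact: nondecreasing_cvgn_le.
Qed.

End Property.

Theorem theorem3p12 (R : realType) (r s : nat) (Q : {set {set 'I_s}})
  (P : forall n : nat, {set {set 'I_n}} -> bool) :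
  (2 <= r)%N -> (r <= s)%N -> is_rgraph r Q -> hereditary r P -> Qflat R Q P ->
  forall (n : nat) (H : {set {set 'I_n}}), (s <= n)%N -> P n H ->
    (Ncount Q H)%:R <= piQP R Q P * (n%:R ^+ s) / (s`!)%:R
    /\ (forall p : R, 1 <= p ->
          lamH p Q H <= piQP R Q P * powR (n%:R) (s%:R - s%:R / p)).
Proof.
move=> r_ge2 r_le_s _ P_her P_flat n H s_le_n PH.
have s_gt0 : (0 < s)%N by apply: leq_trans r_le_s; apply: leq_trans r_ge2.
have n_gt0 : (0 < n)%N by apply: leq_trans s_le_n.
have lamH1_le_pi : lamH 1 Q H <= piQP R Q P.
  exact: le_trans (lamH_le_lamPn 1 H PH) (lamPn1_le_piQP n s_gt0 P_her P_flat).
split=> [|p p_ge1].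
  apply: le_trans (Ncount_le_lamH1 H s_gt0 n_gt0) _.
  by rewrite ler_wpM2r ?invr_ge0 ?ler0n // ler_wpM2r ?exprn_ge0 ?ler0n.
apply: le_trans (lamH_le_lamH1 H p s_gt0 n_gt0 p_ge1) _.
by apply: ler_wpM2r; rewrite ?powR_ge0.
Qed.
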